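(* Let $\Sigma$ be a finite alphabet with $|\Sigma|\ge 2$, let $m,n$ be positive integers with $m\ge 2$, and let $\rho,\rho_1,\rho_2,\rho_3$ be real numbers with $0<\rho<1$, $\rho_1>0$, $\rho_2>0$, $\rho_3>0$ and $\rho_1+\rho_2+\rho_3\le 1$. Then the Markov chains with transition matrices $S^{\mathfrak{N}(n)}_{\rho_1,\rho_2,\rho_3}$, $S^{\mathfrak{N}_m(n)}_{\rho_1,\rho_2,\rho_3}$ and $S^{\mathfrak{N}'_m(n)}_{\rho_1,\rho_2,\rho_3}$ are aperiodic, and so are the Markov chains with transition matrices $S^{\mathfrak{N}(n)^\bullet}_{\rho}$, $S^{\mathfrak{N}_m(n)^\bullet}_{\rho}$ and $S^{\mathfrak{N}'_m(n)^\bullet}_{\rho}$.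
   Context: A non-deterministic automaton (NFA) over $\Sigma$ is a tuple $(Q,\Sigma,\Delta,I,F)$ with $Q$ a finite set of states, $\Delta\subseteq Q\times\Sigma\times Q$ the transitions, $I\subseteq Q$ the initial states and $F\subseteq Q$ the final states. A path is a sequence of transitions $(p_0,a_0,q_0)\cdots(p_k,a_k,q_k)$ with $q_i=p_{i+1}$. The NFA is accessible if every state is reachable by a path from an initial state, co-accessible if from every state a final state is reachable by a path, and trim if both. $\mathfrak{N}(n)$ is the set of trim NFAs over $\Sigma$ with state set $Q=\{1,\dots,n\}$. $\mathfrak{N}_m(n)$ is the set of automata in $\mathfrak{N}(n)$ such that for each state $p$ there are at most $m$ pairs $(a,q)$ with $(p,a,q)\in\Delta$. $\mathfrak{N}'_m(n)$ is the set of automata in $\mathfrak{N}(n)$ such that for each state $p$ and each letter $a$ there are at most $m$ states $q$ with $(p,a,q)\in\Delta$. For a class $\mathfrak{X}$, $\mathfrak{X}^\bullet$ is the subclass of automata whose set of initial states is exactly $\{1\}$. For an automaton $\mathcal{A}=(Q,\Sigma,\Delta,I,F)$: $\mathsf{Ch_{init}}(\mathcal{A},q)$ is $\mathcal{A}$ with $q$ removed from $I$ if $q\in I$ and added to $I$ otherwise; $\mathsf{Ch_{final}}(\mathcal{A},q)$ is defined similarly with $F$; $\mathsf{Ch_{trans}}(\mathcal{A},(p,a,q))$ is $\mathcal{A}$ with $(p,a,q)$ removed from $\Delta$ if present and added otherwise. For a class $\mathfrak{X}$ of automata with state set $Q=\{1,\dots,n\}$ and reals $\rho_i\in[0,1]$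 with $\rho_1+\rho_2+\rho_3\le1$, the matrix $S^{\mathfrak{X}}_{\rho_1,\rho_2,\rho_3}$ on $\mathfrak{X}\times\mathfrak{X}$ is: for $x\ne y$, $S(x,y)=\rho_1/n$ if $y=\mathsf{Ch_{init}}(x,q)$ for some $q$; $S(x,y)=\rho_2/n$ if $y=\mathsf{Ch_{final}}(x,q)$ for some $q$; $S(x,y)=\rho_3/(|\Sigma|n^2)$ if $y=\mathsf{Ch_{trans}}(x,(p,a,q))$ for some $(p,a,q)\in Q\times\Sigma\times Q$; $S(x,y)=0$ otherwise; and $S(x,x)=1-\sum_{y\ne x}S(x,y)$. For $\mathfrak{X}\in\{\mathfrak{N}(n),\mathfrak{N}_m(n),\mathfrak{N}'_m(n)\}$ and $0<\rho<1$, $S^{\mathfrak{X}^\bullet}_\rho$ is the matrix $S^{\mathfrak{X}^\bullet}_{0,\rho,1-\rho}$ defined by the same rules on the class $\mathfrak{X}^\bullet$. A Markov chain is aperiodic if for every state $x$ the gcd of the lengths of all cycles through $x$ in the graph of nonzero transition probabilities is $1$. *)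

From mathcomp Require Import all_boot all_order all_algebra.
Set Implicit Arguments. Unset Strict Implicit. Unset Printing Implicit Defensive.
Import Order.TTheory GRing.Theory Num.Theory.

(* NFAs over alphabet Sigma with state set Q = {1,...,n}, represented as
   'I_n (state i+1 of the paper is the ordinal i; state 1 is the ordinal 0).
   An automaton is a triple (I, F, Delta). *)
Section Automata.
Variables (Sigma : finType) (n : nat).

Definition aut := ({set 'I_n} * {set 'I_n} * {set ('I_n * Sigma * 'I_n)})%type.

Definition init (A : aut) : {set 'I_n} := A.1.1.
Definition final (A : aut) : {set 'I_n} := A.1.2.
Definition trans (A : aut) : {set ('I_n * Sigma * 'I_n)} := A.2.

Definition step (A : aut) : rel 'I_n :=
  fun p q => [exists a : Sigma, (p, a, q) \in trans A].

Definition accessible (A : aut) : bool :=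
  [forall q, [exists p in init A, connect (step A) p q]].
Definition coaccessible (A : aut) : bool :=
  [forall p, [exists q in final A, connect (step A) p q]].
Definition trim (A : aut) : bool := accessible A && coaccessible A.

Definition NFA : pred aut := fun A => trim A.
Definition NFA_m (m : nat) : pred aut := fun A =>
  trim A &&
  [forall p : 'I_n, #|[set aq : Sigma * 'I_n | (p, aq.1, aq.2) \in trans A]| <= m].
Definition NFA'_m (m : nat) : pred aut := fun A =>
  trim A &&
  [forall p : 'I_n, forall a : Sigma, #|[set q : 'I_n | (p, a, q) \in trans A]| <= m].

Definition bullet (X : pred aut) : pred aut := fun A =>
  X A && (init A == [set i : 'I_n | val i == 0%N]).

Definition toggle (T : finType) (S : {set T}) (x : T) : {set T} :=
  if x \in S then S :\ x else x |: S.

Definition ch_init (A : aut) (q : 'I_n) : aut := (toggle (init A) q, final A, trans A).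
Definition ch_final (A : aut) (q : 'I_n) : aut := (init A, toggle (final A) q, trans A).
Definition ch_trans (A : aut) (t : 'I_n * Sigma * 'I_n) : aut :=
  (init A, final A, toggle (trans A) t).

Variable R : realFieldType.
Local Open Scope ring_scope.

Definition Soff (r1 r2 r3 : R) (x y : aut) : R :=
  if [exists q, y == ch_init x q] then r1 / n%:R
  else if [exists q, y == ch_final x q] then r2 / n%:R
  else if [exists t, y == ch_trans x t] then r3 / (#|Sigma|%:R * n%:R ^+ 2)
  else 0.

(* the matrix S^X_{r1,r2,r3} on X x X (only its entries for x, y in X matter) *)
Definition Smat (X : pred aut) (r1 r2 r3 : R) (x y : aut) : R :=
  if x == y then 1 - \sum_(z | X z && (z != x)) Soff r1 r2 r3 x z
  else Soff r1 r2 r3 x y.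

Definition Sbullet (X : pred aut) (rho : R) : aut -> aut -> R :=
  Smat (bullet X) 0 rho (1 - rho).

Definition cycle_length (X : pred aut) (P : aut -> aut -> R) (x : aut) (k : nat) : Prop :=
  exists s : seq aut,
    [/\ size s = k, (0 < k)%N, all X s,
        path (fun u v => P u v != 0) x s & last x s == x].

(* aperiodicity: for every state x in X, the gcd of the cycle lengths through x
   is 1, i.e. 1 is the only common divisor of all of them *)
Definition aperiodic (X : pred aut) (P : aut -> aut -> R) : Prop :=
  forall x, X x ->
    forall d : nat, (forall k, cycle_length X P x k -> (d %| k)%N) -> d = 1%N.

End Automata.

From mathcomp Require Import all_boot all_order all_algebra ring lra.
Import Order.TTheory GRing.Theory Num.Theory.
Set Implicit Arguments. Unset Strict Implicit. Unset Printing Implicit Defensive.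
Local Open Scope ring_scope.

(* They are reversible with
   positive probability in both directions, so a single move out of x and back
   is a cycle of length 2.  If some final toggle of x leaves the class, then the
   probability mass of that move stays on the diagonal, so x carries a
   self-loop and has cycles of lengths 1 and 2.  Otherwise remove a final state
   of x (coaccessibility guarantees one): the resulting automaton stays in the
   class and has fewer final states, and by induction it has cycles of two
   consecutive lengths k+1, k+2, which the detour through it turns into cycles
   of lengths k+3, k+4 through x.  Two consecutive cycle lengths force period 1. *)

Lemma toggleK (T : finType) (S : {set T}) x : toggle (toggle S x) x = S.
Proof.
rewrite /toggle; case: (boolP (x \in S)) => Sx.
  by rewrite setD11 setD1K.
by rewrite setU11 setU1K.
Qed.

Lemma toggle_neq (T : finType) (S : {set T}) x : toggle S x != S.
Proof.
rewrite /toggle; case: (boolP (x \in S)) => Sx; apply/eqP => E.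
  by move: Sx; rewrite -{1}E setD11.
by move: Sx; rewrite -E setU11.
Qed.

Section ConstantSums.
Variable R : numDomainType.

Lemma sum_const_preim (T U : finType) (P : pred T) (f : U -> T) (c : R) :
  \sum_(z | P z) \sum_(u | z == f u) c = \sum_(u | P (f u)) c.
Proof.
rewrite (partition_big f P) //; apply: eq_bigr => z Pz.
by apply: eq_bigl => u; rewrite eq_sym; case: eqP => [->|_]; rewrite ?Pz ?andbF.
Qed.

Lemma sum_const_predT_le (U : finType) (P : pred U) (c : R) :
  0 <= c -> \sum_(u | P u) c <= \sum_(u : U) c.
Proof. by move=> c0; rewrite [leRHS](bigID P) /= lerDl sumr_ge0. Qed.

Lemma sum_const_predT_lt (U : finType) (P : pred U) (c : R) u0 :
  0 < c -> ~~ P u0 -> \sum_(u | P u) c < \sum_(u : U) c.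
Proof.
move=> c0 Pu0; rewrite [ltRHS](bigID P) /= ltrDl.
by rewrite (bigD1 u0) //= ltr_pwDl // sumr_ge0 // => u _; rewrite ltW.
Qed.

Lemma const_le_sum_preim (T U : finType) (f : U -> T) (c : R) z u :
  0 <= c -> z == f u -> c <= \sum_(u' | z == f u') c.
Proof. by move=> c0 zu; rewrite (bigD1 u) //= lerDl sumr_ge0. Qed.

End ConstantSums.

Section CycleLengths.
Variables (Sigma : finType) (n : nat) (R : realFieldType).
Variables (X : pred (aut Sigma n)) (P : aut Sigma n -> aut Sigma n -> R).

Lemma cycle_length_loop x k :
  X x -> P x x != 0 -> cycle_length X P x k.+1.
Proof.
move=> Xx Pxx; elim: k => [|k [s [<- _ Xs xs /eqP sx]]].
  by exists [:: x]; rewrite /= Xx Pxx eqxx.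
by exists (x :: s); rewrite /= Xx Xs Pxx xs sx eqxx.
Qed.

Lemma cycle_length_detour x y k :
  X x -> X y -> P x y != 0 -> P y x != 0 ->
  cycle_length X P y k -> cycle_length X P x k.+2.
Proof.
move=> Xx Xy Pxy Pyx [s [<- _ Xs ys /eqP ys_y]].
exists (y :: rcons s x); split=> //=; first by rewrite size_rcons.
  by rewrite all_rcons Xx Xy Xs.
by rewrite Pxy rcons_path ys ys_y Pyx.
by rewrite last_rcons.
Qed.

Lemma aperiodic_consecutive_cycles :
  (forall x, X x -> exists k, cycle_length X P x k /\ cycle_length X P x k.+1) ->
  aperiodic X P.
Proof.
move=> cyc x Xx d d_dvd; have [k [ck ck1]] := cyc x Xx.
by have := dvdn_sub (d_dvd _ ck1) (d_dvd _ ck); rewrite subSnn dvdn1 => /eqP.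
Qed.

End CycleLengths.

Lemma coaccessible_final (Sigma : finType) (n : nat) (x : aut Sigma n) :
  (0 < n)%N -> coaccessible x -> exists q, q \in final x.
Proof. by move=> n_gt0 /forallP/(_ (Ordinal n_gt0))/existsP[q /andP[fq _]]; exists q. Qed.

Section FinalToggles.
Variables (Sigma : finType) (n : nat) (R : realFieldType).
Variables (X : pred (aut Sigma n)) (r1 r2 r3 : R).
Hypotheses (r1_ge0 : 0 <= r1) (r2_gt0 : 0 < r2) (r3_ge0 : 0 <= r3).
Hypothesis (r_le1 : r1 + r2 + r3 <= 1).
Hypotheses (n_gt0 : (0 < n)%N) (Sigma_gt0 : (0 < #|Sigma|)%N).

Lemma ch_finalK (x : aut Sigma n) q : ch_final (ch_final x q) q = x.
Proof. by case: x => [[i f] t]; rewrite /ch_final /= toggleK. Qed.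

Lemma ch_final_neq (x : aut Sigma n) q : ch_final x q != x.
Proof. by apply: contra (toggle_neq (final x) q) => /eqP {2}<-. Qed.

Lemma Soff_ch_final (x : aut Sigma n) q :
  Soff r1 r2 r3 x (ch_final x q) = r2 / n%:R.
Proof.
rewrite /Soff; case: existsP => [[q' /eqP E]|_].
  by move/(congr1 (@final Sigma n))/eqP: E; rewrite /final /= (negbTE (toggle_neq _ _)).
by case: existsP => // -[]; exists q.
Qed.

Lemma Smat_ch_final_neq0 (x : aut Sigma n) q : Smat X r1 r2 r3 x (ch_final x q) != 0.
Proof.
rewrite /Smat (eq_sym x) (negbTE (ch_final_neq x q)) Soff_ch_final.
by rewrite mulf_neq0 ?invr_eq0 // gt_eqF // ltr0n.
Qed.

Lemma Smat_ch_final_back_neq0 (x : aut Sigma n) q :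
  Smat X r1 r2 r3 (ch_final x q) x != 0.
Proof. by rewrite -{2}(ch_finalK x q) Smat_ch_final_neq0. Qed.

Let c1 := r1 / n%:R.
Let c2 := r2 / n%:R.
Let c3 := r3 / (#|Sigma|%:R * n%:R ^+ 2).

Lemma c1_ge0 : 0 <= c1. Proof. by rewrite divr_ge0 ?ler0n. Qed.
Lemma c2_gt0 : 0 < c2. Proof. by rewrite divr_gt0 // ltr0n. Qed.
Lemma c3_ge0 : 0 <= c3. Proof. by rewrite divr_ge0 // mulr_ge0 ?exprn_ge0 ?ler0n. Qed.

Lemma Soff_le_preim (x z : aut Sigma n) :
  Soff r1 r2 r3 x z <=
    \sum_(q | z == ch_init x q) c1 + \sum_(q | z == ch_final x q) c2
    + \sum_(t | z == ch_trans x t) c3.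
Proof.
have s1 : 0 <= \sum_(q | z == ch_init x q) c1 by rewrite sumr_ge0 // => *; apply: c1_ge0.
have s2 : 0 <= \sum_(q | z == ch_final x q) c2 by rewrite sumr_ge0 // => *; apply: ltW c2_gt0.
have s3 : 0 <= \sum_(t | z == ch_trans x t) c3 by rewrite sumr_ge0 // => *; apply: c3_ge0.
rewrite /Soff -/c1 -/c2 -/c3.
case: existsP => [[q /(const_le_sum_preim c1_ge0)]|_]; first lra.
case: existsP => [[q /(const_le_sum_preim (ltW c2_gt0))]|_]; first lra.
case: existsP => [[t /(const_le_sum_preim c3_ge0)]|_]; lra.
Qed.

(* The three families of moves out of x carry total weight r1, r2 and r3;
   a final toggle leaving X is missing from the off-diagonal sum. *)
Lemma sum_Soff_lt (x : aut Sigma n) q0 : ~~ X (ch_final x q0) ->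
  \sum_(z | X z && (z != x)) Soff r1 r2 r3 x z < r1 + r2 + r3.
Proof.
move=> Xq0; set Q := fun z => X z && (z != x).
have nR0 : n%:R != 0 :> R by rewrite pnatr_eq0 -lt0n.
have SR0 : #|Sigma|%:R != 0 :> R by rewrite pnatr_eq0 -lt0n.
have tot1 : \sum_(q : 'I_n) c1 = r1 by rewrite sumr_const card_ord -mulr_natr divfK.
have tot2 : \sum_(q : 'I_n) c2 = r2 by rewrite sumr_const card_ord -mulr_natr divfK.
have tot3 : \sum_(t : 'I_n * Sigma * 'I_n) c3 = r3.
  by rewrite sumr_const !card_prod card_ord -mulr_natr !natrM /c3; field; rewrite nR0.
have le1 : \sum_(q | Q (ch_init x q)) c1 <= r1.
  by rewrite -tot1 sum_const_predT_le ?c1_ge0.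
have lt2 : \sum_(q | Q (ch_final x q)) c2 < r2.
  by rewrite -tot2 (sum_const_predT_lt (u0 := q0) c2_gt0) // /Q (negbTE Xq0).
have le3 : \sum_(t | Q (ch_trans x t)) c3 <= r3.
  by rewrite -tot3 sum_const_predT_le ?c3_ge0.
apply: le_lt_trans (ler_sum _ (fun z _ => Soff_le_preim x z)) _.
rewrite !big_split /= !sum_const_preim; lra.
Qed.

Lemma Smat_diag_neq0 (x : aut Sigma n) q0 : ~~ X (ch_final x q0) ->
  Smat X r1 r2 r3 x x != 0.
Proof.
move=> Xq0; rewrite /Smat eqxx subr_eq0 eq_sym lt_eqF //.
exact: lt_le_trans (sum_Soff_lt Xq0) r_le1.
Qed.

Hypothesis X_coaccessible : forall x, X x -> coaccessible x.

Lemma consecutive_cycles (x : aut Sigma n) : X x ->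
  exists k, cycle_length X (Smat X r1 r2 r3) x k.+1 /\
            cycle_length X (Smat X r1 r2 r3) x k.+2.
Proof.
elim: {x}#|final x| {-2}x (erefl #|final x|) => [|N IH] x cardx Xx;
  have [q fq] := coaccessible_final n_gt0 (X_coaccessible Xx).
  by move: cardx; rewrite (cardD1 q) fq.
case: (boolP [exists q', ~~ X (ch_final x q')]) => [/existsP[q' Xq']|].
  by exists 0%N; split; apply: cycle_length_loop => //; apply: Smat_diag_neq0 Xq'.
rewrite negb_exists => /forallP X_ch.
have Xy := negbNE (X_ch q).
have cardy : #|final (ch_final x q)| = N.
  apply/eqP; rewrite -eqSS -cardx (cardsD1 q (final x)) fq.
  by rewrite /final /= /toggle fq add1n.
have [k [ck1 ck2]] := IH _ cardy Xy.
by exists k.+2; split; apply: (cycle_length_detour Xx Xy);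
  rewrite ?Smat_ch_final_neq0 ?Smat_ch_final_back_neq0.
Qed.

Lemma aperiodic_Smat : aperiodic X (Smat X r1 r2 r3).
Proof.
apply: aperiodic_consecutive_cycles => x Xx.
by have [k ck] := consecutive_cycles Xx; exists k.+1.
Qed.

End FinalToggles.

Theorem lemma2 (R : realFieldType) (Sigma : finType) (m n : nat)
    (rho rho1 rho2 rho3 : R) :
  (2 <= #|Sigma|)%N -> (0 < n)%N -> (2 <= m)%N ->
  0 < rho -> rho < 1 ->
  0 < rho1 -> 0 < rho2 -> 0 < rho3 -> rho1 + rho2 + rho3 <= 1 ->
    aperiodic (@NFA Sigma n) (Smat (@NFA Sigma n) rho1 rho2 rho3) /\
      aperiodic (@NFA_m Sigma n m) (Smat (@NFA_m Sigma n m) rho1 rho2 rho3) /\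
      aperiodic (@NFA'_m Sigma n m) (Smat (@NFA'_m Sigma n m) rho1 rho2 rho3) /\
      aperiodic (bullet (@NFA Sigma n)) (Sbullet (@NFA Sigma n) rho) /\
      aperiodic (bullet (@NFA_m Sigma n m)) (Sbullet (@NFA_m Sigma n m) rho) /\
      aperiodic (bullet (@NFA'_m Sigma n m)) (Sbullet (@NFA'_m Sigma n m) rho).
Proof.
move=> Sigma_ge2 n_gt0 _ rho_gt0 rho_lt1 rho1_gt0 rho2_gt0 rho3_gt0 rho_le1.
have Sigma_gt0 : (0 < #|Sigma|)%N by apply: leq_trans Sigma_ge2.
have aperS (X : pred (aut Sigma n)) : (forall x, X x -> coaccessible x) ->
    aperiodic X (Smat X rho1 rho2 rho3).
  exact: aperiodic_Smat (ltW rho1_gt0) rho2_gt0 (ltW rho3_gt0) rho_le1 n_gt0 Sigma_gt0.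
have aperB (X : pred (aut Sigma n)) : (forall x, X x -> coaccessible x) ->
    aperiodic (bullet X) (Sbullet X rho).
  move=> Xco; apply: aperiodic_Smat (lexx 0) rho_gt0 _ _ n_gt0 Sigma_gt0 _.
  - by rewrite subr_ge0; apply: ltW.
  - by rewrite add0r addrC subrK.
  - by move=> x /andP[/Xco].
have coNFA (x : aut Sigma n) : NFA x -> coaccessible x by case/andP.
have coNFA_m (x : aut Sigma n) : NFA_m m x -> coaccessible x by case/andP=> /coNFA.
have coNFA'_m (x : aut Sigma n) : NFA'_m m x -> coaccessible x by case/andP=> /coNFA.
by do !split; [exact: aperS coNFA | exact: aperS coNFA_m | exact: aperS coNFA'_m
  | exact: aperB coNFA | exact: aperB coNFA_m | exact: aperB coNFA'_m].
Qed.
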